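(* Let $(\mathbf F,\prec)$ be an IS-family over a finite set $V$. Let $S_1,S_2\in\mathbf F$ with $S_1\prec S_2$ and let $v\in S_1\setminus S_2$. Let $S^*$ be the witness of $v$ w.r.t. $S_1$. Then $S^*\preceq S_2$.
   Context: Let $V$ be a finite set, $n=|V|$, $\mathbf F$ a family of subsets of $V$ and $\prec$ a strict partial order on $\mathbf F$; $S\preceq S'$ means $S\prec S'$ or $S=S'$. For $S\in\mathbf F$ and $v\in V$, $S$ covers $v$ if there is $S'\in\mathbf F$ with $S'\prec S$ and $v\in S'\setminus S$. $Pred(S)$ is the set of $S'\in\mathbf F$ with $S'\prec S$ such that there is no $S''\in\mathbf F$ with $S'\prec S''\prec S$. The visible set $Vis(S)$ is the set of $v\in V$ such that $v\in S'$ for some $S'\in Pred(S)$ and $v$ is not covered by any element of $Pred(S)$. For $S\in\mathbf F$ and $v\in S$, a witness of $v$ w.r.t. $S$ is a $\prec$-minimal element $S'\in\mathbf F$ with $S\prec S'$ and $v\in S\setminus S'$. $(\mathbf F,\prec)$ is an IS-family if: (SE) there is a unique element $sm(\mathbf F)\in\mathbf F$ with $sm(\mathbf F)\prec S$ for every other $S\in\mathbf F$; (SM) $S_1\prec S_2$ implies $|S_1|<|S_2|$; (SW) for every $S\in\mathbf F$ and $v\in S$ there is at most one witness of $v$ w.r.t. $S$; (TE) if $S_1\prec S_2\prec S_3$ are in $\mathbf F$ and $v\in S_1\setminus S_2$ then $v\in S_1\setminus S_3$; (LVS) for every $S\in\mathbf F$ and $S'\in Pred(S)$, $|S'|\le |Vis(S)|$;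 (DVS) for every $S\in\mathbf F$ with $S\ne sm(\mathbf F)$, $Vis(S)$ is not a subset of $S$; (EC) $sm(\mathbf F)$ can be computed in $O(n^3)$ time, for given $S\in\mathbf F$ and $v\in S$ the witness of $v$ w.r.t. $S$ can be computed (or its nonexistence reported) in $O(n^3)$ time, and $S_1\prec S_2$ can be tested in $O(|S_1|)$ time. *)

(* V is a finite type, F a family of subsets of V,
   prec a strict partial order on F, given as a boolean relation on {set V}
   (only its restriction to F matters). *)
From mathcomp Require Import all_boot.
Set Implicit Arguments. Unset Strict Implicit. Unset Printing Implicit Defensive.

Section ISFamily.
Variable V : finType.
Variable F : {set {set V}}.
Variable prec : rel {set V}.

Definition preceq (S S' : {set V}) : Prop := prec S S' \/ S = S'.

Definition strict_po_on : Prop :=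
  (forall S, S \in F -> ~~ prec S S) /\
  (forall S1 S2 S3, S1 \in F -> S2 \in F -> S3 \in F ->
     prec S1 S2 -> prec S2 S3 -> prec S1 S3).

Definition covers (S : {set V}) (v : V) : bool :=
  [exists S', [&& S' \in F, prec S' S & v \in S' :\: S]].

Definition is_pred (S S' : {set V}) : bool :=
  [&& S' \in F, prec S' S &
      ~~ [exists S'', [&& S'' \in F, prec S' S'' & prec S'' S]]].

Definition Vis (S : {set V}) : {set V} :=
  [set v | [exists S', is_pred S S' && (v \in S')] &&
           [forall S'', is_pred S S'' ==> ~~ covers S'' v]].

Definition witness (S : {set V}) (v : V) (S' : {set V}) : Prop :=
  [/\ S' \in F, prec S S', v \in S :\: S' &
      ~ exists2 S'', S'' \in F &
          [/\ prec S S'', v \in S :\: S'' & prec S'' S'] ].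

Definition is_sm (sm : {set V}) : Prop :=
  sm \in F /\ (forall S, S \in F -> S != sm -> prec sm S).

(* IS-family: axioms SE, SM, SW, TE, LVS, DVS (EC omitted) *)
Definition IS_family : Prop :=
  strict_po_on /\
  [/\ (* SE and DVS *)
      (exists sm, [/\ is_sm sm,
        (forall sm', is_sm sm' -> sm' = sm) &
        (forall S, S \in F -> S != sm -> ~~ (Vis S \subset S))]),
      (* SM *)
      (forall S1 S2, S1 \in F -> S2 \in F -> prec S1 S2 -> #|S1| < #|S2|),
      (* SW *)
      (forall S v, S \in F -> v \in S -> forall W1 W2,
         witness S v W1 -> witness S v W2 -> W1 = W2),
      (* TE *)
      (forall S1 S2 S3 v, S1 \in F -> S2 \in F -> S3 \in F ->
         prec S1 S2 -> prec S2 S3 -> v \in S1 :\: S2 -> v \in S1 :\: S3) &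
      (* LVS *)
      (forall S S', S \in F -> is_pred S S' -> #|S'| <= #|Vis S|)].

End ISFamily.

From mathcomp Require Import all_boot.

Set Implicit Arguments. Unset Strict Implicit. Unset Printing Implicit Defensive.

(* Among the sets T with S1 < T, v in S1 \ T and T <= S2, one of least
   cardinality is a witness: by transitivity anything below it is again such
   a set, and by (SM) it would be smaller.  By (SW) this witness is S*. *)

Section WitnessBelow.

Variables (V : finType) (F : {set {set V}}) (prec : rel {set V}).

Hypothesis prec_trans : forall S1 S2 S3, S1 \in F -> S2 \in F -> S3 \in F ->
  prec S1 S2 -> prec S2 S3 -> prec S1 S3.
Hypothesis card_prec : forall S1 S2, S1 \in F -> S2 \in F ->
  prec S1 S2 -> #|S1| < #|S2|.

Lemma exists_witness_preceq (S T : {set V}) (v : V) :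
  T \in F -> prec S T -> v \in S :\: T ->
  exists2 W, witness F prec S v W & preceq prec W T.
Proof.
move=> TF ST vST.
pose cand W := [&& W \in F, prec S W, v \in S :\: W & prec W T || (W == T)].
have candT : cand T by rewrite /cand TF ST vST eqxx orbT.
case: (@arg_minnP _ T cand (fun W => #|W|) candT) => W /and4P [WF SW vSW WT] Wmin.
have W_T : preceq prec W T by case/orP: WT => [|/eqP]; [left|right].
exists W => //; split=> // -[U UF [SU vSU UW]].
have candU : cand U.
  rewrite /cand UF SU vSU /=.
  by case: W_T => [WT'|<-]; rewrite ?(prec_trans UF WF TF UW WT') ?UW.
by have := Wmin U candU; rewrite leqNgt card_prec.
Qed.

End WitnessBelow.

Theorem proposition2 (V : finType) (F : {set {set V}})
  (prec : rel {set V}) :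
  IS_family F prec ->
  forall (S1 S2 : {set V}) (v : V),
    S1 \in F -> S2 \in F -> prec S1 S2 -> v \in S1 :\: S2 ->
    forall Sstar : {set V}, witness F prec S1 v Sstar ->
    preceq prec Sstar S2.
Proof.
move=> [[_ prec_trans] [_ card_prec witness_uniq _ _]] S1 S2 v S1F S2F S12 vS12
  Sstar wSstar.
have [W wW W_S2] := exists_witness_preceq prec_trans card_prec S2F S12 vS12.
have vS1 : v \in S1 by case/setDP: vS12.
by rewrite -(witness_uniq _ _ S1F vS1 _ _ wW wSstar).
Qed.
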